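(* Let $K>0$, let $\eta:[0,K]\to\mathbb{R}$ be a speed-density relation, let $T>0$, and let $k_0\in(0,K]$ be a density at which $\eta$ is differentiable; set $v_0=\eta(k_0)$. Consider Phillips' model $$k_t+(kv)_x=0,\qquad v_t+v v_x=\frac{\eta(k)-v}{T},$$ linearized about the equilibrium $(k_0,v_0)$, i.e. the linear system for perturbations $\kappa(t,x),\nu(t,x)$: $$\kappa_t+v_0\kappa_x+k_0\nu_x=0,\qquad \nu_t+v_0\nu_x=\frac{\eta'(k_0)\kappa-\nu}{T}.$$ Call this linearized system linearly stable if for every real $m\neq 0$ and every complex $\omega$ for which the system admits a solution $(\kappa,\nu)=(a,b)e^{i(mx-\omega t)}$ with $(a,b)\in\mathbb{C}^2\setminus\{(0,0)\}$, one has $\operatorname{Im}\omega<0$. Then the linearized system is not linearly stable (Phillips' model is linearly unstable): there exist a real $m\neq 0$, a complex $\omega$ with $\operatorname{Im}\omega\ge 0$, and $(a,b)\neq(0,0)$ such that $(a,b)e^{i(mx-\omega t)}$ solves the linearized system.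
   Context: $k(t,x)$ is traffic density, $v(t,x)$ is traffic speed, $K$ is the jam density, and $T$ is the relaxation time. *)

From Stdlib Require Import Reals.
From Coquelicot Require Import Coquelicot.
Open Scope R_scope.

Definition cexp (z : C) : C :=
  (RtoC (exp (Re z)) * (cos (Im z), sin (Im z)))%C.

Definition Ci : C := (0, 1).

Definition plane_wave (c : C) (m : R) (omega : C) (t x : R) : C :=
  (c * cexp (Ci * (RtoC m * RtoC x - omega * RtoC t)))%C.

Definition deriv_on_dom (eta : R -> R) (K k0 d : R) : Prop :=
  filterlim (fun k => (eta k - eta k0) / (k - k0))
    (within (fun k => 0 <= k <= K /\ k <> k0) (locally k0)) (locally d).

(* Partial derivatives are those of complex-valued functions of real
   variables (C viewed as a normed R-module). *)
Definition solves_linearized (k0 v0 d T : R) (kappa nu : R -> R -> C) : Prop :=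
  exists kt kx nt nx : R -> R -> C,
    (forall t x,
       is_derive (fun s => kappa s x) t (kt t x) /\
       is_derive (fun y => kappa t y) x (kx t x) /\
       is_derive (fun s => nu s x) t (nt t x) /\
       is_derive (fun y => nu t y) x (nx t x)) /\
    (forall t x,
       (kt t x + RtoC v0 * kx t x + RtoC k0 * nx t x = 0)%C /\
       (nt t x + RtoC v0 * nx t x
         = (RtoC d * kappa t x - nu t x) / RtoC T)%C).

(* Substituting (kappa, nu) = (a, b) e^{i(mx - omega t)} and writing
   sigma = omega - v0 m, the linearized system becomes sigma a = k0 m b and
   (1 - i T sigma) b = eta'(k0) a; with a = k0 m and b = sigma it reduces to
   the dispersion relation sigma (1 - i T sigma) = eta'(k0) k0 m.  Rather than
   solving it for sigma given m, pick sigma in the closed upper half-plane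
   with a real left-hand side and read off m: sigma = 0 if eta'(k0) = 0, and
   otherwise sigma = (2 + i)/(3T), for which sigma (1 - i T sigma) = 10/(9T).
   Then Im omega = Im sigma >= 0.  Only the value eta'(k0) enters, so the
   differentiability hypothesis merely names it. *)

From Stdlib Require Import Reals Lra.
From Coquelicot Require Import Coquelicot.
Open Scope R_scope.

Lemma is_derive_Cpair (f g : R -> R) (x a b : R) :
  is_derive f x a -> is_derive g x b ->
  @is_derive R_AbsRing C_R_NormedModule (fun y => (f y, g y)) x (a, b).
Proof.
  intros Hf Hg.
  pose proof (is_derive_plus _ _ _ _ _
    (is_derive_scal_l f x a ((1, 0) : C_R_NormedModule) Hf)
    (is_derive_scal_l g x b ((0, 1) : C_R_NormedModule) Hg)) as H.
  unfold plus, scal in H; simpl in H; unfold prod_plus, prod_scal in H; simpl in H.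
  unfold plus, scal, mult in H; simpl in H; unfold plus, scal, mult in H; simpl in H.
  rewrite !Rmult_0_r, !Rmult_1_r, Rplus_0_l, Rplus_0_r in H.
  revert H; apply is_derive_ext; intros y.
  now rewrite !Rmult_0_r, !Rmult_1_r, Rplus_0_l, Rplus_0_r.
Qed.

Lemma is_derive_cexp_line (c z w : C) (s : R) :
  is_derive (fun s : R => c * cexp (z + RtoC s * w))%C s
    (c * w * cexp (z + RtoC s * w))%C.
Proof.
  destruct c as [c1 c2], z as [z1 z2], w as [w1 w2].
  unfold cexp, Cmult, Cplus, RtoC; simpl.
  apply is_derive_Cpair; auto_derive; auto; unfold Rminus; ring.
Qed.

Lemma is_derive_plane_wave_t (c : C) (m : R) (omega : C) (t x : R) :
  is_derive (fun s => plane_wave c m omega s x) t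
    (- Ci * omega * plane_wave c m omega t x)%C.
Proof.
  assert (Hphase : forall s,
    (Ci * (RtoC m * RtoC x - omega * RtoC s)
     = Ci * RtoC m * RtoC x + RtoC s * (- Ci * omega))%C) by (intros; ring).
  unfold plane_wave; rewrite Hphase.
  replace (- Ci * omega * _)%C
    with (c * (- Ci * omega) * cexp (Ci * RtoC m * RtoC x + RtoC t * (- Ci * omega)))%C
    by ring.
  apply (is_derive_ext (fun s => c * cexp (Ci * RtoC m * RtoC x + RtoC s * (- Ci * omega)))%C).
  - intros s; now rewrite Hphase.
  - apply is_derive_cexp_line.
Qed.

Lemma is_derive_plane_wave_x (c : C) (m : R) (omega : C) (t x : R) :
  is_derive (fun y => plane_wave c m omega t y) x
    (Ci * RtoC m * plane_wave c m omega t x)%C.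
Proof.
  assert (Hphase : forall y,
    (Ci * (RtoC m * RtoC y - omega * RtoC t)
     = - (Ci * omega * RtoC t) + RtoC y * (Ci * RtoC m))%C) by (intros; ring).
  unfold plane_wave; rewrite Hphase.
  replace (Ci * RtoC m * _)%C
    with (c * (Ci * RtoC m) * cexp (- (Ci * omega * RtoC t) + RtoC x * (Ci * RtoC m)))%C
    by ring.
  apply (is_derive_ext (fun y => c * cexp (- (Ci * omega * RtoC t) + RtoC y * (Ci * RtoC m)))%C).
  - intros y; now rewrite Hphase.
  - apply is_derive_cexp_line.
Qed.

Definition dispersion (T : R) (sigma : C) : C :=
  (sigma - Ci * RtoC T * sigma * sigma)%C.

Lemma plane_wave_mode_solves_linearized (k0 v0 d T m : R) (sigma : C) :
  T <> 0 -> dispersion T sigma = RtoC (d * k0 * m) ->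
  solves_linearized k0 v0 d T
    (plane_wave (RtoC (k0 * m)) m (RtoC (v0 * m) + sigma))
    (plane_wave sigma m (RtoC (v0 * m) + sigma)).
Proof.
  intros HT Hdisp.
  assert (HTC : RtoC T <> 0%C) by (intros H; injection H; auto).
  set (omega := (RtoC (v0 * m) + sigma)%C).
  exists (fun t x => - Ci * omega * plane_wave (RtoC (k0 * m)) m omega t x)%C,
         (fun t x => Ci * RtoC m * plane_wave (RtoC (k0 * m)) m omega t x)%C,
         (fun t x => - Ci * omega * plane_wave sigma m omega t x)%C,
         (fun t x => Ci * RtoC m * plane_wave sigma m omega t x)%C.
  split; intros t x.
  - split; [| split; [| split]].
    + apply is_derive_plane_wave_t.
    + apply is_derive_plane_wave_x.
    + apply is_derive_plane_wave_t.
    + apply is_derive_plane_wave_x.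
  - unfold plane_wave, omega; set (E := cexp _); split.
    + rewrite !RtoC_mult; ring.
    + replace (RtoC d * (RtoC (k0 * m) * E))%C with (RtoC (d * k0 * m) * E)%C
        by (rewrite !RtoC_mult; ring).
      rewrite <- Hdisp; unfold dispersion; rewrite RtoC_mult; field; exact HTC.
Qed.

Lemma dispersion_two_plus_i (T : R) :
  T <> 0 -> dispersion T (2 / (3 * T), 1 / (3 * T)) = RtoC (10 / (9 * T)).
Proof.
  intros HT; unfold dispersion, Ci, RtoC, Cmult, Cminus, Cplus, Copp; simpl.
  apply injective_projections; simpl; field; exact HT.
Qed.

Lemma exists_dispersion_root_Im_ge0 (T c : R) :
  0 < T ->
  exists (m : R) (sigma : C),
    m <> 0 /\ 0 <= Im sigma /\ dispersion T sigma = RtoC (c * m).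
Proof.
  intros HT.
  destruct (Req_dec c 0) as [Hc | Hc].
  - exists 1, (RtoC 0); split; [lra | split; [simpl; lra |]].
    unfold dispersion; rewrite Hc, Rmult_0_l; ring.
  - exists (10 / (9 * T * c)), (2 / (3 * T), 1 / (3 * T)); split; [| split].
    + apply Rmult_integral_contrapositive_currified; [lra|].
      apply Rinv_neq_0_compat; repeat apply Rmult_integral_contrapositive_currified; lra.
    + simpl; apply Rlt_le, Rdiv_lt_0_compat; lra.
    + rewrite dispersion_two_plus_i by lra; f_equal; field; lra.
Qed.

Theorem theorem2p2 (K T k0 : R) (eta : R -> R) (d : R) :
  0 < K -> 0 < T -> 0 < k0 <= K ->
  deriv_on_dom eta K k0 d ->
  exists (m : R) (omega : C) (a b : C),
    m <> 0 /\ 0 <= Im omega /\ (a <> RtoC 0 \/ b <> RtoC 0) /\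
    solves_linearized k0 (eta k0) d T
      (plane_wave a m omega) (plane_wave b m omega).
Proof.
  intros _ HT Hk0 _.
  destruct (exists_dispersion_root_Im_ge0 T (d * k0) HT) as (m & sigma & Hm & Hsigma & Hdisp).
  exists m, (RtoC (eta k0 * m) + sigma)%C, (RtoC (k0 * m)), sigma.
  split; [exact Hm | split; [| split]].
  - change (0 <= 0 + Im sigma); lra.
  - left; intros H; injection H; apply Rmult_integral_contrapositive_currified; lra.
  - apply plane_wave_mode_solves_linearized; [lra | exact Hdisp].
Qed.
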